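(* Let $f(x)=\sum_{i,j=1}^n a_{ij}x_ix_j$ be a real quadratic form with symmetric matrix $A=(a_{ij})$ and $\det A\ne0$. Then exactly one of the sets $C(f)$, $\mathrm{St}(f)$ is nonempty.
   Context: $H_n=\{x\in\mathbb R^n:\sum x_i=0\}$; $C(f)$ is the set of $h\in H_n\setminus\{0\}$ such that either $\partial f/\partial x_i(h)\le 0$ for all $i$ or $\partial f/\partial x_i(h)\ge 0$ for all $i$. $\mathrm{St}(f)=\{a\in\mathbb R^n: a_i>0\ \forall i,\ \partial f/\partial x_i(a)=\partial f/\partial x_j(a)\ \forall i,j\}$. *)

From HB Require Import structures.
From mathcomp Require Import all_boot all_order all_algebra.
From mathcomp Require Import all_classical all_reals all_analysis.
Set Implicit Arguments. Unset Strict Implicit. Unset Printing Implicit Defensive.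
Import Order.TTheory GRing.Theory Num.Theory.
Local Open Scope ring_scope.

(* Vectors of R^n are row vectors 'rV[R]_n; coordinate i of x is x 0 i. *)

Definition qform (R : realType) (n : nat) (A : 'M[R]_n) (x : 'rV[R]_n) : R :=
  \sum_(i < n) \sum_(j < n) A i j * x 0 i * x 0 j.

Definition partial (R : realType) (n : nat) (f : 'rV[R]_n -> R) (i : 'I_n)
    (x : 'rV[R]_n) : R :=
  derive1 (fun t : R => f (x + t *: delta_mx 0 i)) 0.

Definition inH (R : realType) (n : nat) (x : 'rV[R]_n) : Prop :=
  \sum_(i < n) x 0 i = 0.

Definition inC (R : realType) (n : nat) (f : 'rV[R]_n -> R) (h : 'rV[R]_n) : Prop :=
  inH h /\ h <> 0 /\
  ((forall i, partial f i h <= 0) \/ (forall i, partial f i h >= 0)).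

Definition inSt (R : realType) (n : nat) (f : 'rV[R]_n -> R) (a : 'rV[R]_n) : Prop :=
  (forall i, 0 < a 0 i) /\ (forall i j, partial f i a = partial f j a).

From HB Require Import structures.
From mathcomp Require Import all_boot all_order all_algebra.
From mathcomp Require Import all_classical all_reals all_analysis.
From mathcomp Require Import ring.
Import Order.TTheory GRing.Theory Num.Theory.
Local Open Scope ring_scope.

(* For symmetric A, df/dx_i (x) = 2 (xA)_i. Hence St(f) is the set of positive
   a with aA constant, and C(f) the set of nonzero h in H_n with hA of constant
   sign. Both cannot be nonempty: sum_i a_i (hA)_i = sum_j h_j (aA)_j = 0 and
   a > 0 force hA = 0, so h = 0. If C(f) is empty, put b = 1 A^-1. Either b has
   a strict constant sign and +-b lies in St(f), or some nonzero y >= 0 is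
   orthogonal to b (a basis vector, or a nonnegative combination of two basis
   vectors at which b changes sign); then h = y A^-1 lies in C(f), because
   sum_i h_i = y . b = 0 and hA = y >= 0. *)

Lemma sum_mul_mulmx {R : comPzSemiRingType} {n} (A : 'M[R]_n) (u v : 'rV[R]_n) :
  \sum_i u 0 i * (v *m A) 0 i = \sum_j v 0 j * (u *m A^T) 0 j.
Proof.
under eq_bigr do rewrite mxE mulr_sumr.
rewrite exchange_big /=; apply: eq_bigr => j _.
by rewrite mxE mulr_sumr; apply: eq_bigr => i _; rewrite mxE mulrCA.
Qed.

Lemma sum_mul_const (R : pzSemiRingType) (I : finType) (h F : I -> R) :
  (forall i j, F i = F j) -> \sum_i h i = 0 -> \sum_i h i * F i = 0.
Proof.
move=> Fconst h0; case: (pickP (fun _ : I => true)) => [k _ | I0].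
  by under eq_bigr do rewrite (Fconst _ k); rewrite -mulr_suml h0 mul0r.
by rewrite big_pred0.
Qed.

Lemma psumr_mul_eq0 {R : numDomainType} {I : finType} {a y : I -> R} :
  (forall i, 0 < a i) -> (forall i, 0 <= y i) ->
  \sum_i a i * y i = 0 -> forall i, y i = 0.
Proof.
move=> apos yge0 /psumr_eq0P ay0 i.
have /(_ i isT) /eqP := ay0 (fun i _ => mulr_ge0 (ltW (apos i)) (yge0 i)).
by rewrite mulf_eq0 gt_eqF //= => /eqP.
Qed.

Lemma mulmx_trmx_delta (R : pzSemiRingType) m n (M : 'M[R]_(m, n)) i j :
  (M *m (delta_mx 0 j : 'rV_n)^T) i 0 = M i j.
Proof. by rewrite trmx_delta -colE mxE. Qed.

Lemma derive1_quadratic (R : realType) (a b c : R) :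
  derive1 (fun t : R => a + t * b + t * (t * c)) 0 = b.
Proof.
rewrite derive1E derive_val !(scale0r, add0r, mul0r, mul1r, addr0, scaler0).
exact: mulr1.
Qed.

Lemma sum0_nonneg_mulmx_eq0 {R : numDomainType} {n} (A : 'M[R]_n) (a h : 'rV[R]_n) :
  A^T = A -> A \in unitmx ->
  (forall i, 0 < a 0 i) -> (forall i j, (a *m A) 0 i = (a *m A) 0 j) ->
  \sum_i h 0 i = 0 -> (forall i, 0 <= (h *m A) 0 i) -> h = 0.
Proof.
move=> symA unitA apos abal hsum hA_ge0.
have : \sum_i a 0 i * (h *m A) 0 i = 0 by rewrite sum_mul_mulmx symA sum_mul_const.
move=> /(psumr_mul_eq0 apos hA_ge0) hA0.
have : h *m A = 0 by apply/rowP => i; rewrite hA0 mxE.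
by move/(congr1 (mulmx^~ (invmx A))); rewrite -mulmxA mulmxV // mulmx1 mul0mx.
Qed.

Lemma exists_nonneg_orthogonal {R : realDomainType} {n} {b : 'rV[R]_n} :
  ~ (forall i, 0 < b 0 i) -> ~ (forall i, b 0 i < 0) ->
  exists y : 'rV[R]_n,
    [/\ y != 0, forall i, 0 <= y 0 i & \sum_i y 0 i * b 0 i = 0].
Proof.
move=> /existsNP [i /negP]; rewrite -leNgt => bi_le0.
move=> /existsNP [j /negP]; rewrite -leNgt => bj_ge0.
have dotE (y : 'rV[R]_n) : \sum_l y 0 l * b 0 l = (y *m b^T) 0 0.
  by rewrite mxE; apply: eq_bigr => l _; rewrite mxE.
have delta_ge0 k l : 0 <= (delta_mx 0 k : 'rV[R]_n) 0 l by rewrite mxE ler0n.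
have [bi0 | bi_neq0] := eqVneq (b 0 i) 0.
  exists (delta_mx 0 i); split=> //; last by rewrite dotE -rowE !mxE.
  by apply/eqP => /rowP /(_ i); rewrite !mxE !eqxx; apply/eqP; exact: oner_neq0.
have bi_lt0 : b 0 i < 0 by rewrite lt_neqAle bi_neq0.
have neq_ij : j != i by apply: contraTneq bj_ge0 => ->; rewrite -ltNge.
exists (b 0 j *: delta_mx 0 i - b 0 i *: delta_mx 0 j); split.
- apply/eqP => /rowP /(_ j); rewrite !mxE !eqxx (negbTE neq_ij) /= mulr0 sub0r mulr1.
  by move=> /eqP; rewrite oppr_eq0 (negbTE bi_neq0).
- move=> l; rewrite !mxE; apply: addr_ge0; first by rewrite mulr_ge0.
  by rewrite -mulNr mulr_ge0 ?oppr_ge0 ?ler0n.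
- by rewrite dotE mulmxBl -!scalemxAl -!rowE !mxE mulrC subrr.
Qed.

Section QuadraticForm.
Variables (R : realType) (n : nat).
Implicit Types (A : 'M[R]_n) (a d h x y : 'rV[R]_n).

Lemma qformE A x : qform A x = (x *m A *m x^T) 0 0.
Proof.
rewrite /qform mxE exchange_big /=; apply: eq_bigr => j _.
by rewrite !mxE big_distrl; apply: eq_bigr => i _; rewrite [A i j * _]mulrC.
Qed.

Lemma qformD_scale A x d (t : R) :
  qform A (x + t *: d) =
  qform A x + t * (x *m A *m d^T + d *m A *m x^T) 0 0 + t * (t * qform A d).
Proof.
rewrite !qformE linearD linearZ /= !(mulmxDl, mulmxDr) -!scalemxAl -!scalemxAr.
by rewrite !mxE; ring.
Qed.

Lemma partial_qform A i x : partial (qform A) i x = (x *m (A + A^T)) 0 i.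
Proof.
rewrite /partial; under eq_fun do rewrite qformD_scale.
rewrite derive1_quadratic mxE; set e : 'rV[R]_n := delta_mx 0 i.
have -> : (e *m A *m x^T) 0 0 = (e *m A *m x^T)^T 0 0 by rewrite [RHS]mxE.
by rewrite !trmx_mul trmxK mulmxA /e !mulmx_trmx_delta mulmxDr [RHS]mxE.
Qed.

Lemma partial_qform_sym A i x :
  A^T = A -> partial (qform A) i x = 2 * (x *m A) 0 i.
Proof. by move=> symA; rewrite partial_qform symA mulmxDr mxE mulr2n mulrDl mul1r. Qed.

Lemma inC_qform {A} h : A^T = A ->
  inC (qform A) h <-> inH h /\ h <> 0 /\
    ((forall i, (h *m A) 0 i <= 0) \/ (forall i, 0 <= (h *m A) 0 i)).
Proof.
move=> symA; rewrite /inC.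
have -> : (forall i, partial (qform A) i h <= 0) = (forall i, (h *m A) 0 i <= 0).
  by apply: eq_forall => i; rewrite partial_qform_sym // pmulr_rle0.
have -> : (forall i, partial (qform A) i h >= 0) = (forall i, 0 <= (h *m A) 0 i).
  by apply: eq_forall => i; rewrite partial_qform_sym // pmulr_rge0.
by [].
Qed.

Lemma inSt_qform {A} a : A^T = A ->
  inSt (qform A) a <->
  (forall i, 0 < a 0 i) /\ (forall i j, (a *m A) 0 i = (a *m A) 0 j).
Proof.
move=> symA; rewrite /inSt.
have -> : (forall i j, partial (qform A) i a = partial (qform A) j a) =
          (forall i j, (a *m A) 0 i = (a *m A) 0 j).
  apply: eq_forall => i; apply: eq_forall => j; rewrite !partial_qform_sym //.
  by apply/propext; split=> [|-> //]; apply: mulfI; rewrite pnatr_eq0.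
by [].
Qed.

Lemma inC_inSt_disjoint A h a :
  A^T = A -> A \in unitmx -> inC (qform A) h -> ~ inSt (qform A) a.
Proof.
move=> symA unitA /(inC_qform _ symA) [hH [hnz hsign]].
move=> /(inSt_qform _ symA) [apos abal]; apply: hnz.
have [hA_le0 | hA_ge0] := hsign; last exact: sum0_nonneg_mulmx_eq0 apos abal hH hA_ge0.
apply: oppr_inj; rewrite oppr0; apply: sum0_nonneg_mulmx_eq0 apos abal _ _ => //.
  by under eq_bigr do rewrite mxE; rewrite sumrN hH oppr0.
by move=> i; rewrite mulNmx mxE oppr_ge0.
Qed.

Lemma inC_qform_nonneg_orthogonal A y :
  A^T = A -> A \in unitmx -> y != 0 -> (forall i, 0 <= y 0 i) ->
  \sum_i y 0 i * ((const_mx 1 : 'rV_n) *m invmx A) 0 i = 0 ->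
  inC (qform A) (y *m invmx A).
Proof.
move=> symA unitA ynz yge0 yorth; apply/inC_qform => //.
rewrite -mulmxA mulVmx // mulmx1; split; last split; last by right.
- have := sum_mul_mulmx (invmx A) (const_mx 1) y.
  rewrite trmx_inv symA yorth /inH => sum0; rewrite -[RHS]sum0.
  by apply: eq_bigr => i _; rewrite [in RHS]mxE mul1r.
- by move=> /(congr1 (mulmx^~ A)); rewrite -mulmxA mulVmx // mulmx1 mul0mx; exact/eqP.
Qed.

Lemma inSt_qform_scale A (s : R) : A^T = A -> A \in unitmx ->
  (forall i, 0 < s * ((const_mx 1 : 'rV_n) *m invmx A) 0 i) ->
  inSt (qform A) (s *: ((const_mx 1 : 'rV_n) *m invmx A)).
Proof.
move=> symA unitA pos; apply/inSt_qform => //; split=> [i | i j]; first by rewrite mxE.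
by rewrite -scalemxAl -mulmxA mulVmx // mulmx1 !mxE.
Qed.

End QuadraticForm.

Theorem proposition2 (R : realType) (n : nat) (A : 'M[R]_n) :
  A^T = A -> \det A != 0 ->
  ((exists h, inC (qform A) h) /\ ~ (exists a, inSt (qform A) a)) \/
  (~ (exists h, inC (qform A) h) /\ (exists a, inSt (qform A) a)).
Proof.
move=> symA detA; have unitA : A \in unitmx by rewrite unitmxE unitfE.
have [[h hC] | noC] := pselect (exists h, inC (qform A) h).
  by left; split=> [|[a]]; [exists h | exact: inC_inSt_disjoint hC].
right; split=> //; set b : 'rV[R]_n := const_mx 1 *m invmx A.
have [bpos | npos] := pselect (forall i, 0 < b 0 i).
  by exists (1 *: b); apply: inSt_qform_scale => // i; rewrite mul1r.
have [bneg | nneg] := pselect (forall i, b 0 i < 0).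
  by exists ((-1) *: b); apply: inSt_qform_scale => // i; rewrite mulN1r oppr_gt0.
have [y [ynz yge0 yorth]] := exists_nonneg_orthogonal npos nneg.
by case: noC; exists (y *m invmx A); exact: inC_qform_nonneg_orthogonal.
Qed.
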